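(* Let $0<t<1$ and $\alpha>0$. Define $H^{t}:\mathbb{R}\to\mathbb{R}$ by $H^{t}(p)=0$ if $p=0$, $H^{t}(p)=t$ if $0<|p|\le 1$, and $H^{t}(p)=1$ if $|p|>1$. Let $x\in\mathbb{R}$ with $|x|\ge 1$, and consider $E(p)=(x-p)^{2}+\alpha H^{t}(p)$ for $p\in\mathbb{R}$. Then a global minimizer of $E$ over $p\in\mathbb{R}$ is given as follows. (i) If $\alpha>\frac{2-t+2\sqrt{1-t}}{t^{2}}$: $p=0$ if $|x|\le\sqrt{\alpha}$, and $p=x$ if $|x|>\sqrt{\alpha}$. (ii) If $\frac{2-t+2\sqrt{1-t}}{t^{2}}\ge\alpha\ge\frac{2-t-2\sqrt{1-t}}{t^{2}}$: $p=0$ if $|x|\le\frac{1+\alpha t}{2}$; $p=\operatorname{sgn}(x)$ if $\frac{1+\alpha t}{2}<|x|\le 1+\sqrt{\alpha(1-t)}$; and $p=x$ if $|x|>1+\sqrt{\alpha(1-t)}$. (iii) If $\frac{2-t-2\sqrt{1-t}}{t^{2}}>\alpha>0$: $p=\operatorname{sgn}(x)$ if $1\le|x|\le 1+\sqrt{\alpha(1-t)}$, and $p=x$ if $|x|>1+\sqrt{\alpha(1-t)}$.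
   Context: $\operatorname{sgn}(x)$ denotes the sign of $x$ ($1$ if $x>0$, $-1$ if $x<0$). The function $H^{t}$ is the per-entry penalty of the ''$l_0^t$ measure'', which counts entries of absolute value greater than $1$ with weight $1$ and nonzero entries of absolute value at most $1$ with weight $t$. *)

From Stdlib Require Import Reals Lra.
Open Scope R_scope.

Definition sgn (x : R) : R :=
  if Rlt_dec 0 x then 1 else if Rlt_dec x 0 then -1 else 0.

Definition Ht (t p : R) : R :=
  if Req_EM_T p 0 then 0 else if Rle_dec (Rabs p) 1 then t else 1.

Definition Efun (t alpha x p : R) : R := (x - p)^2 + alpha * Ht t p.

Definition is_global_min (f : R -> R) (p : R) : Prop :=
  forall q : R, f p <= f q.

From Stdlib Require Import Reals Lra Psatz.
Open Scope R_scope.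

(* For |x| >= 1 the energy is bounded below by x^2 at p = 0, by (|x|-1)^2 + alpha t
   on 0 < |p| <= 1 and by alpha on |p| > 1, and these three values are attained at
   0, sgn x and (when |x| > 1) x.  The minimizer is therefore the cheapest of the
   three candidates, and the pairwise comparisons are governed by the thresholds
   |x| = sqrt alpha, |x| = 1 + sqrt (alpha (1 - t)) and |x| = (1 + alpha t) / 2.
   Writing s = sqrt alpha and r = sqrt (1 - t), one has
   2 s - (1 + alpha t) = (1 - s (1 - r)) (s (1 + r) - 1), and the two critical
   values of alpha in the statement are 1 / (1 - r)^2 and 1 / (1 + r)^2, exactly
   where one of these factors changes sign. *)

Section Candidates.

Variables t alpha x : R.

Lemma Efun_0 : Efun t alpha x 0 = Rabs x ^ 2.
Proof.
  unfold Efun, Ht; destruct (Req_EM_T 0 0) as [_ | ]; [| congruence].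
  rewrite <- pow2_abs, Rminus_0_r; ring.
Qed.

Lemma Efun_sgn : x <> 0 -> Efun t alpha x (sgn x) = (Rabs x - 1) ^ 2 + alpha * t.
Proof.
  intros hx0; unfold Efun, Ht, sgn.
  destruct (Rlt_dec 0 x); [| destruct (Rlt_dec x 0); [| lra]].
  - rewrite (Rabs_pos_eq x), Rabs_R1 by lra.
    destruct (Req_EM_T 1 0); [lra |]; destruct (Rle_dec 1 1); [ring | lra].
  - rewrite (Rabs_left x) by lra.
    replace (Rabs (-1)) with 1 by (rewrite Rabs_left; lra).
    destruct (Req_EM_T (-1) 0); [lra |]; destruct (Rle_dec 1 1); [ring | lra].
Qed.

Lemma Efun_self : 1 < Rabs x -> Efun t alpha x x = alpha.
Proof.
  intros hx; unfold Efun, Ht.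
  destruct (Req_EM_T x 0) as [-> | ]; [rewrite Rabs_R0 in hx; lra |].
  destruct (Rle_dec (Rabs x) 1); [lra | ring].
Qed.

Hypothesis hx : 1 <= Rabs x.

Lemma is_global_min_Efun_of_le p :
  Efun t alpha x p <= Rabs x ^ 2 ->
  Efun t alpha x p <= (Rabs x - 1) ^ 2 + alpha * t ->
  Efun t alpha x p <= alpha ->
  is_global_min (Efun t alpha x) p.
Proof.
  intros h0 hsgn hself q; unfold Efun at 2, Ht.
  destruct (Req_EM_T q 0) as [-> | ]; [rewrite Rminus_0_r, <- pow2_abs; lra |].
  destruct (Rle_dec (Rabs q) 1).
  - assert (Rabs x - 1 <= Rabs (x - q)) by (pose proof (Rabs_triang_inv x q); lra).
    rewrite <- (pow2_abs (x - q)); nra.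
  - pose proof (pow2_ge_0 (x - q)); lra.
Qed.

Hypotheses (halpha : 0 <= alpha) (ht1 : t <= 1).

Lemma is_global_min_Efun_0 :
  Rabs x <= sqrt alpha -> Rabs x <= (1 + alpha * t) / 2 ->
  is_global_min (Efun t alpha x) 0.
Proof.
  intros hs hthr; pose proof (sqrt_sqrt alpha halpha).
  apply is_global_min_Efun_of_le; rewrite Efun_0; nra.
Qed.

Lemma is_global_min_Efun_sgn :
  (1 + alpha * t) / 2 <= Rabs x -> Rabs x <= 1 + sqrt (alpha * (1 - t)) ->
  is_global_min (Efun t alpha x) (sgn x).
Proof.
  intros hthr hr; pose proof (sqrt_sqrt (alpha * (1 - t)) ltac:(nra)).
  assert (x <> 0) by (intros ->; rewrite Rabs_R0 in hx; lra).
  apply is_global_min_Efun_of_le; rewrite Efun_sgn by assumption; nra.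
Qed.

Lemma is_global_min_Efun_self :
  sqrt alpha < Rabs x -> 1 + sqrt (alpha * (1 - t)) < Rabs x ->
  is_global_min (Efun t alpha x) x.
Proof.
  intros hs hr; pose proof (sqrt_sqrt alpha halpha).
  pose proof (sqrt_sqrt (alpha * (1 - t)) ltac:(nra)).
  pose proof (sqrt_pos (alpha * (1 - t))); pose proof (sqrt_pos alpha).
  apply is_global_min_Efun_of_le; rewrite Efun_self by lra; nra.
Qed.

End Candidates.

Lemma Rinv_sqr_lt_iff u a : 0 < u -> 0 <= a -> / u ^ 2 < a <-> 1 < sqrt a * u.
Proof.
  intros hu ha.
  assert (hsq : u ^ 2 * a = (sqrt a * u) ^ 2) by (rewrite <- (sqrt_sqrt a ha) at 1; ring).
  assert (hnn : 0 <= sqrt a * u) by (pose proof (sqrt_pos a); nra).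
  split; intros h.
  - apply (Rmult_lt_compat_l (u ^ 2)) in h; [| nra].
    rewrite Rinv_r, hsq in h by nra; nra.
  - apply (Rmult_lt_reg_l (u ^ 2)); [nra | rewrite Rinv_r, hsq by nra; nra].
Qed.

Lemma lt_Rinv_sqr_iff u a : 0 < u -> 0 <= a -> a < / u ^ 2 <-> sqrt a * u < 1.
Proof.
  intros hu ha.
  assert (hsq : u ^ 2 * a = (sqrt a * u) ^ 2) by (rewrite <- (sqrt_sqrt a ha) at 1; ring).
  assert (hnn : 0 <= sqrt a * u) by (pose proof (sqrt_pos a); nra).
  split; intros h.
  - apply (Rmult_lt_compat_l (u ^ 2)) in h; [| nra].
    rewrite Rinv_r, hsq in h by nra; nra.
  - apply (Rmult_lt_reg_l (u ^ 2)); [nra | rewrite Rinv_r, hsq by nra; nra].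
Qed.

Section Thresholds.

Variables t alpha : R.
Hypotheses (ht0 : 0 < t) (ht1 : t < 1) (halpha : 0 < alpha).

Let r_facts : 0 < sqrt (1 - t) < 1 /\ sqrt (1 - t) ^ 2 = 1 - t.
Proof.
  pose proof (sqrt_sqrt (1 - t) ltac:(lra)); pose proof (sqrt_lt_R0 (1 - t) ltac:(lra)).
  split; [split; [lra | nra] | lra].
Qed.

Lemma threshold_up_eq : (2 - t + 2 * sqrt (1 - t)) / t ^ 2 = / (1 - sqrt (1 - t)) ^ 2.
Proof.
  destruct r_facts as [hr hr2]; set (r := sqrt (1 - t)) in *.
  replace t with (1 - r ^ 2) by lra; field; lra.
Qed.

Lemma threshold_lo_eq : (2 - t - 2 * sqrt (1 - t)) / t ^ 2 = / (1 + sqrt (1 - t)) ^ 2.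
Proof.
  destruct r_facts as [hr hr2]; set (r := sqrt (1 - t)) in *.
  replace t with (1 - r ^ 2) by lra; field; lra.
Qed.

Lemma threshold_up_lt_iff :
  (2 - t + 2 * sqrt (1 - t)) / t ^ 2 < alpha <-> 1 < sqrt alpha * (1 - sqrt (1 - t)).
Proof. rewrite threshold_up_eq; apply Rinv_sqr_lt_iff; lra. Qed.

Lemma lt_threshold_lo_iff :
  alpha < (2 - t - 2 * sqrt (1 - t)) / t ^ 2 <-> sqrt alpha * (1 + sqrt (1 - t)) < 1.
Proof. rewrite threshold_lo_eq; apply lt_Rinv_sqr_iff; lra. Qed.

Lemma two_sqrt_sub_one_add_mul :
  2 * sqrt alpha - (1 + alpha * t) =
  (1 - sqrt alpha * (1 - sqrt (1 - t))) * (sqrt alpha * (1 + sqrt (1 - t)) - 1).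
Proof.
  destruct r_facts as [_ hr2]; pose proof (sqrt_sqrt alpha ltac:(lra)) as hs.
  set (r := sqrt (1 - t)) in *; set (s := sqrt alpha) in *.
  replace t with (1 - r ^ 2) by lra; rewrite <- hs; ring.
Qed.

Lemma thresholds_large_alpha :
  1 < sqrt alpha * (1 - sqrt (1 - t)) ->
  1 + sqrt (alpha * (1 - t)) < sqrt alpha < (1 + alpha * t) / 2.
Proof.
  intros h; destruct r_facts as [hr _]; pose proof two_sqrt_sub_one_add_mul.
  pose proof (sqrt_pos alpha); rewrite sqrt_mult by lra.
  assert (1 < sqrt alpha * (1 + sqrt (1 - t))) by nra.
  split; [lra |].
  assert ((1 - sqrt alpha * (1 - sqrt (1 - t))) * (sqrt alpha * (1 + sqrt (1 - t)) - 1) < 0)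
    by (apply Rmult_neg_pos; lra).
  lra.
Qed.

Lemma thresholds_medium_alpha :
  sqrt alpha * (1 - sqrt (1 - t)) <= 1 -> 1 <= sqrt alpha * (1 + sqrt (1 - t)) ->
  (1 + alpha * t) / 2 <= sqrt alpha <= 1 + sqrt (alpha * (1 - t)).
Proof.
  intros h1 h2; pose proof two_sqrt_sub_one_add_mul.
  rewrite sqrt_mult by lra; nra.
Qed.

Lemma thresholds_small_alpha :
  sqrt alpha * (1 + sqrt (1 - t)) < 1 -> sqrt alpha < 1 /\ (1 + alpha * t) / 2 < 1.
Proof.
  intros h; destruct r_facts as [hr _].
  pose proof (sqrt_sqrt alpha ltac:(lra)); pose proof (sqrt_pos alpha).
  nra.
Qed.

End Thresholds.

Theorem theorem3p2 (t alpha x : R) (ht0 : 0 < t) (ht1 : t < 1)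
  (halpha : 0 < alpha) (hx : 1 <= Rabs x) :
  let E := Efun t alpha x in
  let up := (2 - t + 2 * sqrt (1 - t)) / t^2 in
  let lo := (2 - t - 2 * sqrt (1 - t)) / t^2 in
  (alpha > up ->
     (Rabs x <= sqrt alpha -> is_global_min E 0) /\
     (Rabs x > sqrt alpha -> is_global_min E x)) /\
  (up >= alpha -> alpha >= lo ->
     (Rabs x <= (1 + alpha * t) / 2 -> is_global_min E 0) /\
     ((1 + alpha * t) / 2 < Rabs x -> Rabs x <= 1 + sqrt (alpha * (1 - t)) ->
        is_global_min E (sgn x)) /\
     (Rabs x > 1 + sqrt (alpha * (1 - t)) -> is_global_min E x)) /\
  (lo > alpha ->
     (1 <= Rabs x -> Rabs x <= 1 + sqrt (alpha * (1 - t)) ->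
        is_global_min E (sgn x)) /\
     (Rabs x > 1 + sqrt (alpha * (1 - t)) -> is_global_min E x)).
Proof.
  intros E up lo.
  pose proof (Rlt_le _ _ halpha) as halpha'; pose proof (Rlt_le _ _ ht1) as ht1'.
  pose proof (is_global_min_Efun_0 t alpha x hx halpha') as min_0.
  pose proof (is_global_min_Efun_sgn t alpha x hx halpha' ht1') as min_sgn.
  pose proof (is_global_min_Efun_self t alpha x hx halpha' ht1') as min_self.
  split; [| split].
  - intros hup; apply threshold_up_lt_iff in hup; [| assumption ..].
    destruct (thresholds_large_alpha t alpha ht0 ht1 halpha hup).
    split; intros; [apply min_0 | apply min_self]; lra.
  - intros hup hlo.
    destruct (thresholds_medium_alpha t alpha ht0 ht1 halpha) as [h1 h2].
    { apply Rnot_lt_le; rewrite <- threshold_up_lt_iff by assumption.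
      apply Rge_not_lt, hup. }
    { apply Rnot_lt_le; rewrite <- lt_threshold_lo_iff by assumption.
      apply Rge_not_lt, hlo. }
    split; [| split]; intros; [apply min_0 | apply min_sgn | apply min_self]; lra.
  - intros hlo; apply lt_threshold_lo_iff in hlo; [| assumption ..].
    destruct (thresholds_small_alpha t alpha ht0 ht1 halpha hlo).
    split; intros; [apply min_sgn | apply min_self]; lra.
Qed.
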